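(* Let $(B',\boldsymbol y',\boldsymbol z',\boldsymbol q',\boldsymbol a')$ be the mutation of a groupoid seed $(B,\boldsymbol y,\boldsymbol z,\boldsymbol q,\boldsymbol a)$ in direction $k$ with sign $\varepsilon\in\{\pm1\}$. Write $\beta$ for the action of $(B,\boldsymbol y,\boldsymbol z,\boldsymbol q,\boldsymbol a)$ and $\beta'$ for the action of $(B',\boldsymbol y',\boldsymbol z',\boldsymbol q',\boldsymbol a')$. Then for every $1\le i\le n$, $\beta'(y'_i)=\beta(y'_i)$, where $\beta(y'_i)$ means the expression for $y'_i$ in terms of $\boldsymbol y$ with each $y_j$ replaced by $\beta(y_j)$. Equivalently, the seed $(B',\beta'\boldsymbol y',\boldsymbol z')$ is the mutation in direction $k$ of the seed $(B,\beta\boldsymbol y,\boldsymbol z)$.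
   Context: Fix positive integers $n$ and $d_1,\dots,d_n$. A seed over $\mathbb R_{>0}$ is a triple $(B,\boldsymbol y,\boldsymbol z)$: $B=(b_{ij})$ an $n\times n$ integer matrix with a fixed diagonal $R=\mathrm{diag}(r_1,\dots,r_n)$, $r_i\in\mathbb Z_{>0}$, such that $RB$ is skew-symmetric; $\boldsymbol y\in\mathbb R_{>0}^n$; $\boldsymbol z=(z_{i,s})_{1\le i\le n,1\le s\le d_i-1}$ with $z_{i,s}\in\mathbb R_{\ge0}$. Put $P_k(\alpha)=1+\sum_{s=1}^{d_k-1}z_{k,s}\alpha^s+\alpha^{d_k}$, and for $\varepsilon\in\{\pm1\}$, $P^\circ_k(\alpha)=P_k(\alpha^\varepsilon)\alpha^{\frac{1-\varepsilon}{2}d_k}$; $[a]_+=\max(a,0)$. Seed mutation in direction $k$ with sign $\varepsilon$: $b'_{ij}=-b_{ij}$ if $i=k$ or $j=k$, else $b'_{ij}=b_{ij}+[-\varepsilon b_{ik}d_k]_+b_{kj}+b_{ik}[\varepsilon d_kb_{kj}]_+$; $y'_k=y_k^{-1}$, $y'_i=y_iy_k^{[\varepsilon d_kb_{ki}]_+}P^\circ_k(y_k^\varepsilon)^{-b_{ki}}$ ($i\ne k$); $z'_{k,s}=z_{k,d_k-s}$, $z'_{i,s}=z_{i,s}$ ($i\ne k$). A groupoid seed is a quintuple $(B,\boldsymbol y,\boldsymbol z,\boldsymbol q,\boldsymbol a)$ with $(B,\boldsymbol y,\boldsymbol z)$ a seed over $\mathbb R_{>0}$, $\boldsymbol q=(q_1,\dots,q_n)\in\mathbb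 R^n$ and $\boldsymbol a=(a_{i,s})_{1\le i\le n,1\le s\le d_i-1}$ real. Its action is $\beta(y_j)=y_j\exp\big(\sum_{i=1}^n r_ib_{ij}y_iq_i\big)$, extended multiplicatively/compositionally to expressions in $\boldsymbol y$ (e.g. $\beta(y_k^\varepsilon)=\beta(y_k)^\varepsilon$); $\beta(B,\boldsymbol y,\boldsymbol z,\boldsymbol q,\boldsymbol a)=(B,\beta\boldsymbol y,\boldsymbol z)$. The mutation in direction $k$ with sign $\varepsilon$ is $(B',\boldsymbol y',\boldsymbol z',\boldsymbol q',\boldsymbol a')$ where $(B',\boldsymbol y',\boldsymbol z')$ is the seed mutation and $q'_k=-q_ky_k^2+\sum_{i'=1}^n[\varepsilon d_kb_{ki'}]_+q_{i'}y_{i'}y_k+\frac{y_k}{r_k}\log\frac{P^\circ_k(\beta(y_k)^\varepsilon)}{P^\circ_k(y_k^\varepsilon)}$, $q'_i=q_iy_k^{-[\varepsilon d_kb_{ki}]_+}P^\circ_k(y_k^\varepsilon)^{b_{ki}}$ ($i\ne k$), $a'_{k,s}=a_{k,d_k-s}+\frac{\varepsilon}{r_k}\int_{y_k^\varepsilon}^{\beta(y_k)^\varepsilon}\frac{u^{\varepsilon(d_k-s)-1}}{P_k(u^\varepsilon)}\,du$, $a'_{i,s}=a_{i,s}$ ($i\ne k$). *)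

From Stdlib Require Import Reals ZArith.
From Coquelicot Require Import Coquelicot.
Open Scope R_scope.

(* Indices are 0-based: i ranges over 0..n-1 (paper: 1..n). *)

Fixpoint rsum (f : nat -> R) (m : nat) : R :=
  match m with
  | O => 0
  | S m' => rsum f m' + f m'
  end.

Definition posp (a : Z) : Z := Z.max a 0.

(* Groupoid seed (B, y, z, q, a); the diagonal R = diag(r) and the degrees d
   are fixed data passed separately. z i s and a i s are meaningful for
   1 <= s <= d i - 1. *)
Record GSeed := mkGSeed {
  gB : nat -> nat -> Z;
  gy : nat -> R;
  gz : nat -> nat -> R;
  gq : nat -> R;
  ga : nat -> nat -> R }.

Definition Ppoly (d : nat -> nat) (z : nat -> nat -> R) (k : nat) (al : R) : R :=
  1 + rsum (fun s => z k (S s) * al ^ (S s)) (d k - 1) + al ^ (d k).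

Definition Pcirc (d : nat -> nat) (z : nat -> nat -> R) (k : nat) (eps : Z) (al : R) : R :=
  Ppoly d z k (powerRZ al eps) * powerRZ al (((1 - eps) / 2) * Z.of_nat (d k)).

Definition mut_B (d : nat -> nat) (B : nat -> nat -> Z) (k : nat) (eps : Z)
  (i j : nat) : Z :=
  if orb (Nat.eqb i k) (Nat.eqb j k) then (- B i j)%Z
  else (B i j + posp (- eps * B i k * Z.of_nat (d k)) * B k j
        + B i k * posp (eps * Z.of_nat (d k) * B k j))%Z.

Definition mut_y (d : nat -> nat) (B : nat -> nat -> Z) (y : nat -> R)
  (z : nat -> nat -> R) (k : nat) (eps : Z) (i : nat) : R :=
  if Nat.eqb i k then / y k
  else y i * powerRZ (y k) (posp (eps * Z.of_nat (d k) * B k i))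
       * powerRZ (Pcirc d z k eps (powerRZ (y k) eps)) (- B k i).

Definition mut_z (d : nat -> nat) (z : nat -> nat -> R) (k : nat) (i s : nat) : R :=
  if Nat.eqb i k then z k (d k - s)%nat else z i s.

Definition action (n : nat) (r : nat -> Z) (S : GSeed) (j : nat) : R :=
  gy S j * exp (rsum (fun i => IZR (r i) * IZR (gB S i j) * gy S i * gq S i) n).

Definition mut_q (n : nat) (d : nat -> nat) (r : nat -> Z) (k : nat) (eps : Z)
  (S : GSeed) (i : nat) : R :=
  let B := gB S in let y := gy S in let z := gz S in let q := gq S in
  if Nat.eqb i k then
    - q k * (y k) ^ 2
    + rsum (fun i' => IZR (posp (eps * Z.of_nat (d k) * B k i')) * q i' * y i' * y k) n
    + (y k / IZR (r k)) *
        ln (Pcirc d z k eps (powerRZ (action n r S k) eps)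
            / Pcirc d z k eps (powerRZ (y k) eps))
  else q i * powerRZ (y k) (- posp (eps * Z.of_nat (d k) * B k i))
       * powerRZ (Pcirc d z k eps (powerRZ (y k) eps)) (B k i).

Definition mut_a (n : nat) (d : nat -> nat) (r : nat -> Z) (k : nat) (eps : Z)
  (S : GSeed) (i s : nat) : R :=
  let y := gy S in
  if Nat.eqb i k then
    ga S k (d k - s)%nat
    + IZR eps / IZR (r k) *
      RInt (fun u => powerRZ u (eps * (Z.of_nat (d k) - Z.of_nat s) - 1)
                     / Ppoly d (gz S) k (powerRZ u eps))
           (powerRZ (y k) eps) (powerRZ (action n r S k) eps)
  else ga S i s.

Definition gmutate (n : nat) (d : nat -> nat) (r : nat -> Z) (k : nat) (eps : Z)
  (S : GSeed) : GSeed :=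
  mkGSeed (mut_B d (gB S) k eps)
          (mut_y d (gB S) (gy S) (gz S) k eps)
          (mut_z d (gz S) k)
          (mut_q n d r k eps S)
          (mut_a n d r k eps S).

(* (B, y, z) with fixed r, d is a seed over R_{>0} (plus q, a real: no condition). *)
Definition is_gseed (n : nat) (d : nat -> nat) (r : nat -> Z) (S : GSeed) : Prop :=
  (forall i, (i < n)%nat -> (0 < r i)%Z) /\
  (forall i, (i < n)%nat -> (0 < d i)%nat) /\
  (forall i j, (i < n)%nat -> (j < n)%nat -> (r i * gB S i j = - (r j * gB S j i))%Z) /\
  (forall i, (i < n)%nat -> 0 < gy S i) /\
  (forall i s, (i < n)%nat -> (1 <= s)%nat -> (s <= d i - 1)%nat -> 0 <= gz S i s).

From Stdlib Require Import Reals ZArith Lra Lia Psatz.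
Open Scope R_scope.

(* Write [X_j = r_j y_j q_j], so that [beta(y_i) = y_i exp(E_i)] with
   [E_i = sum_j b_ji X_j].  Mutation leaves [X_j] unchanged for [j <> k]
   (the factors of [y'_j] and [q'_j] cancel) and replaces [X_k] by
   [-X_k + W + log(P_k(beta y_k) / P_k(y_k))], where [W] collects the
   positive parts coming from [q'_k]; skew-symmetrizability
   [r_k [eps d_k b_kj]_+ = [-eps b_jk d_k]_+ r_j] identifies the two
   forms of [W].  Expanding [E'_i] with the mutated exchange matrix, the
   [W] terms cancel and one gets [E'_k = -E_k] and, for [i <> k],
   [E'_i = E_i - b_ki log(P_k(beta y_k) / P_k(y_k)) + [eps d_k b_ki]_+ E_k],
   which is exactly the exponent of the seed mutation of [beta y]. *)

Lemma rsum_ext f g m : (forall j, (j < m)%nat -> f j = g j) -> rsum f m = rsum g m.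
Proof. induction m; intros H; simpl; auto. rewrite IHm, H; auto. Qed.

Lemma rsum_add f g m : rsum (fun j => f j + g j) m = rsum f m + rsum g m.
Proof. induction m; simpl; [ring | rewrite IHm; ring]. Qed.

Lemma rsum_scal c f m : rsum (fun j => c * f j) m = c * rsum f m.
Proof. induction m; simpl; [ring | rewrite IHm; ring]. Qed.

Lemma rsum_ge0 f m : (forall j, (j < m)%nat -> 0 <= f j) -> 0 <= rsum f m.
Proof.
  induction m; intros H; simpl; [lra|].
  assert (0 <= f m) by (apply H; lia).
  assert (0 <= rsum f m) by (apply IHm; intros; apply H; lia).
  lra.
Qed.

Lemma rsum_D1 f k m : (k < m)%nat ->
  rsum f m = f k + rsum (fun j => if Nat.eqb j k then 0 else f j) m.
Proof.
  induction m; intros H; [lia|]. simpl.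
  destruct (Nat.eq_dec k m) as [->|Hn].
  - rewrite Nat.eqb_refl, (rsum_ext (fun j => if Nat.eqb j m then 0 else f j) f m);
      [ring|].
    intros j Hj. destruct (Nat.eqb_spec j m); [lia | auto].
  - rewrite IHm by lia. destruct (Nat.eqb_spec m k); [lia|]. ring.
Qed.

Lemma posp_mul a x : (0 <= a)%Z -> posp (a * x) = (a * posp x)%Z.
Proof.
  intros. unfold posp. destruct (Z.le_ge_cases x 0).
  - rewrite (Z.max_r x), Z.max_r by nia. ring.
  - rewrite (Z.max_l x), Z.max_l by nia. ring.
Qed.

Lemma Pcirc_pos d z k eps al :
  (forall s, (1 <= s)%nat -> (s <= d k - 1)%nat -> 0 <= z k s) ->
  0 < al -> 0 < Pcirc d z k eps al.
Proof.
  intros Hz Hal. unfold Pcirc, Ppoly.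
  set (b := powerRZ al eps). assert (Hb : 0 < b) by (apply powerRZ_lt; auto).
  apply Rmult_lt_0_compat; [|apply powerRZ_lt; auto].
  assert (0 <= rsum (fun s => z k (S s) * b ^ S s) (d k - 1)).
  { apply rsum_ge0. intros j Hj. apply Rmult_le_pos; [apply Hz; lia | apply pow_le; lra]. }
  pose proof (pow_lt b (d k) Hb). lra.
Qed.

Lemma powerRZ_exp a z : 0 < a -> powerRZ a z = exp (IZR z * ln a).
Proof. intros. now rewrite powerRZ_Rpower. Qed.

Lemma exp_shift_powerRZ y a P Q E F c b :
  0 < y -> 0 < a -> 0 < P -> 0 < Q ->
  y * powerRZ a c * powerRZ P (- b) * exp (E - IZR b * ln (Q / P) + IZR c * F)
  = y * exp E * powerRZ (a * exp F) c * powerRZ Q (- b).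
Proof.
  intros Hy Ha HP HQ.
  assert (HaF : 0 < a * exp F) by (apply Rmult_lt_0_compat; [auto | apply exp_pos]).
  rewrite !powerRZ_exp by auto.
  rewrite ln_mult, ln_exp by (auto; apply exp_pos).
  unfold Rdiv. rewrite ln_mult, ln_Rinv by (auto; apply Rinv_0_lt_compat; auto).
  rewrite <- (exp_ln y) at 1 2 by auto.
  rewrite <- !exp_plus, opp_IZR. f_equal. ring.
Qed.

Definition action_exponent (n : nat) (r : nat -> Z) (S : GSeed) (j : nat) : R :=
  rsum (fun i => IZR (r i) * IZR (gB S i j) * gy S i * gq S i) n.

Lemma actionE n r S j : action n r S j = gy S j * exp (action_exponent n r S j).
Proof. reflexivity. Qed.

Section GroupoidMutation.

Variables (n : nat) (d : nat -> nat) (r : nat -> Z) (S : GSeed) (k : nat) (eps : Z).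

Hypothesis r_pos : forall i, (i < n)%nat -> (0 < r i)%Z.
Hypothesis skew : forall i j, (i < n)%nat -> (j < n)%nat ->
  (r i * gB S i j = - (r j * gB S j i))%Z.
Hypothesis y_pos : forall i, (i < n)%nat -> 0 < gy S i.
Hypothesis z_ge0 : forall s, (1 <= s)%nat -> (s <= d k - 1)%nat -> 0 <= gz S k s.
Hypothesis k_lt_n : (k < n)%nat.

Let S' := gmutate n d r k eps S.
Let X j := IZR (r j) * gy S j * gq S j.
Let c j := posp (eps * Z.of_nat (d k) * gB S k j).
Let W := rsum (fun j => IZR (posp (- eps * gB S j k * Z.of_nat (d k))) * X j) n.
Let Py := Pcirc d (gz S) k eps (powerRZ (gy S k) eps).
Let Pb := Pcirc d (gz S) k eps (powerRZ (action n r S k) eps).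

Lemma gB_kk_eq0 : gB S k k = 0%Z.
Proof. pose proof (skew k k k_lt_n k_lt_n). pose proof (r_pos k k_lt_n). nia. Qed.

Lemma action_k_pos : 0 < action n r S k.
Proof. rewrite actionE. apply Rmult_lt_0_compat; [auto | apply exp_pos]. Qed.

Lemma Py_pos : 0 < Py.
Proof. apply Pcirc_pos; [auto | apply powerRZ_lt; auto]. Qed.

Lemma Pb_pos : 0 < Pb.
Proof. apply Pcirc_pos; [auto | apply powerRZ_lt, action_k_pos]. Qed.

Lemma mut_yq_neq j : j <> k -> gy S' j * gq S' j = gy S j * gq S j.
Proof.
  intros Hj. cbn [S' gmutate gy gq]. unfold mut_y, mut_q.
  destruct (Nat.eqb_spec j k); [contradiction|]. fold Py.
  pose proof Py_pos.
  assert (Ey : powerRZ (gy S k) (c j) * powerRZ (gy S k) (- c j) = 1).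
  { rewrite <- powerRZ_add by (pose proof (y_pos k k_lt_n); lra).
    now rewrite Z.add_opp_diag_r. }
  assert (EP : powerRZ Py (- gB S k j) * powerRZ Py (gB S k j) = 1).
  { rewrite <- powerRZ_add by lra. now rewrite Z.add_opp_diag_l. }
  transitivity (gy S j * gq S j * (powerRZ (gy S k) (c j) * powerRZ (gy S k) (- c j))
    * (powerRZ Py (- gB S k j) * powerRZ Py (gB S k j))); [unfold c; ring|].
  rewrite Ey, EP. ring.
Qed.

Lemma posp_skew j : (j < n)%nat ->
  (r k * c j = posp (- eps * gB S j k * Z.of_nat (d k)) * r j)%Z.
Proof.
  intros Hj. unfold c.
  rewrite <- posp_mul by (pose proof (r_pos k k_lt_n); lia).
  rewrite (Z.mul_comm (posp _) (r j)), <- posp_mul by (pose proof (r_pos j Hj); lia).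
  f_equal. transitivity (- eps * Z.of_nat (d k) * (r j * gB S j k))%Z; [|ring].
  rewrite (skew j k Hj k_lt_n). ring.
Qed.

Lemma mut_ryq_k : IZR (r k) * gy S' k * gq S' k = - X k + W + ln (Pb / Py).
Proof.
  cbn [S' gmutate gy gq]. unfold mut_y, mut_q. rewrite Nat.eqb_refl. fold Py Pb.
  cbv zeta.
  assert (HW : IZR (r k) * rsum (fun j => IZR (c j) * gq S j * gy S j * gy S k) n
               = gy S k * W).
  { unfold W. rewrite <- !rsum_scal. apply rsum_ext. intros j Hj.
    transitivity (IZR (r k * c j) * gq S j * gy S j * gy S k); [rewrite mult_IZR; ring|].
    rewrite posp_skew, mult_IZR by auto. unfold X. ring. }
  pose proof (y_pos k k_lt_n).
  assert (0 < IZR (r k)) by (apply IZR_lt, r_pos, k_lt_n).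
  transitivity (- X k + / gy S k
      * (IZR (r k) * rsum (fun j => IZR (c j) * gq S j * gy S j * gy S k) n)
      + ln (Pb / Py)); [unfold X, c; field; split; lra|].
  rewrite HW. field. lra.
Qed.

Lemma W_D1 : W = rsum (fun j => if Nat.eqb j k then 0 else
                   IZR (posp (- eps * gB S j k * Z.of_nat (d k))) * X j) n.
Proof.
  unfold W. rewrite (rsum_D1 _ k), gB_kk_eq0 by auto.
  replace (- eps * 0 * Z.of_nat (d k))%Z with 0%Z by ring. change (posp 0) with 0%Z. ring.
Qed.

Lemma action_exponent_D1 i : action_exponent n r S i
  = IZR (gB S k i) * X k + rsum (fun j => if Nat.eqb j k then 0 else IZR (gB S j i) * X j) n.
Proof.
  unfold action_exponent. rewrite (rsum_D1 _ k) by auto. unfold X. f_equal; [ring|].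
  apply rsum_ext. intros j _. destruct (Nat.eqb j k); ring.
Qed.

Lemma mut_action_exponent_D1 i : action_exponent n r S' i
  = IZR (gB S' k i) * (IZR (r k) * gy S' k * gq S' k)
    + rsum (fun j => if Nat.eqb j k then 0 else IZR (gB S' j i) * X j) n.
Proof.
  unfold action_exponent. rewrite (rsum_D1 _ k) by auto. f_equal; [ring|].
  apply rsum_ext. intros j _. destruct (Nat.eqb_spec j k) as [|Hj]; [ring|].
  transitivity (IZR (gB S' j i) * IZR (r j) * (gy S' j * gq S' j)); [ring|].
  rewrite (mut_yq_neq j Hj). unfold X. ring.
Qed.

Lemma mut_action_exponent_k : action_exponent n r S' k = - action_exponent n r S k.
Proof.
  rewrite mut_action_exponent_D1, action_exponent_D1, gB_kk_eq0.
  cbn [S' gmutate gB]. unfold mut_B at 1. rewrite Nat.eqb_refl, gB_kk_eq0. simpl.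
  rewrite (rsum_ext _ (fun j => -1 * (if Nat.eqb j k then 0 else IZR (gB S j k) * X j))),
    rsum_scal; [ring|].
  intros j _. unfold mut_B. rewrite Nat.eqb_refl, Bool.orb_true_r.
  destruct (Nat.eqb j k); [ring | rewrite opp_IZR; ring].
Qed.

Lemma mut_action_exponent_neq i : i <> k ->
  action_exponent n r S' i = action_exponent n r S i
    - IZR (gB S k i) * ln (Pb / Py) + IZR (c i) * action_exponent n r S k.
Proof.
  intros Hi. rewrite mut_action_exponent_D1.
  rewrite (rsum_ext (fun j => if Nat.eqb j k then 0 else IZR (gB S' j i) * X j)
    (fun j => (if Nat.eqb j k then 0 else IZR (gB S j i) * X j)
      + IZR (gB S k i) * (if Nat.eqb j k then 0 else
             IZR (posp (- eps * gB S j k * Z.of_nat (d k))) * X j)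
      + IZR (c i) * (if Nat.eqb j k then 0 else IZR (gB S j k) * X j))).
  - rewrite !rsum_add, !rsum_scal, <- W_D1, mut_ryq_k, !action_exponent_D1, gB_kk_eq0.
    cbn [S' gmutate gB]. unfold mut_B. rewrite Nat.eqb_refl. cbn [orb].
    rewrite opp_IZR. ring.
  - intros j _. cbn [S' gmutate gB]. unfold mut_B. destruct (Nat.eqb_spec j k); [ring|].
    destruct (Nat.eqb_spec i k); [contradiction|]. simpl.
    rewrite !plus_IZR, !mult_IZR. unfold c. ring.
Qed.

Lemma action_mutate i : (i < n)%nat ->
  action n r S' i = mut_y d (gB S) (action n r S) (gz S) k eps i.
Proof.
  intros Hi. rewrite actionE. unfold mut_y. destruct (Nat.eqb_spec i k) as [->|Hik].
  - rewrite mut_action_exponent_k, actionE, exp_Ropp.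
    cbn [S' gmutate gy]. unfold mut_y. rewrite Nat.eqb_refl.
    field. split; [apply Rgt_not_eq, exp_pos | pose proof (y_pos k k_lt_n); lra].
  - rewrite mut_action_exponent_neq by auto. fold Pb.
    cbn [S' gmutate gy]. unfold mut_y. destruct (Nat.eqb_spec i k); [contradiction|].
    fold Py. rewrite !actionE.
    apply exp_shift_powerRZ; auto using Py_pos, Pb_pos.
Qed.

End GroupoidMutation.

Theorem mainTheorem2 (n : nat) (d : nat -> nat) (r : nat -> Z) (S : GSeed)
  (k : nat) (eps : Z) :
  is_gseed n d r S ->
  (k < n)%nat ->
  (eps = 1 \/ eps = -1)%Z ->
  forall i, (i < n)%nat ->
    action n r (gmutate n d r k eps S) i
    = mut_y d (gB S) (action n r S) (gz S) k eps i.
Proof.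
  intros [r_pos [_ [skew [y_pos z_ge0]]]] k_lt_n _ i Hi.
  apply action_mutate; auto.
Qed.
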